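(* Let $V$ be an irreducible Harish-Chandra $\mathcal G$-module. Suppose there exist a $\mathbb Z$-basis $\{\boldsymbol\alpha_1,\dots,\boldsymbol\alpha_n\}$ of $\mathbb Z^n$ and a nonzero weight vector $v\in V$ such that $\mathcal G_{\boldsymbol\alpha_i}v=0$ for all $i=1,\dots,n$. Then $V$ is a GHW module up to a change of coordinates: i.e., there is $k\in\mathbb N$ such that $\mathcal G_{\mathbf m}v=0$ for all $\mathbf m=\sum_{i}m_i\boldsymbol\alpha_i$ with $m_i\ge k$ for every $i$ (equivalently, after twisting $V$ by the automorphism $T_A$ with $A\boldsymbol\alpha_i$-coordinates sending $\boldsymbol\alpha_i$ to $\mathbf e_i$, $V$ is a GHW module).
   Context: $n\ge 2$. $\mathcal A_n=\mathbb C[t_1^{\pm1},\dots,t_n^{\pm1}]$, $t^{\mathbf m}=t_1^{m_1}\cdots t_n^{m_n}$, $d_j=t_j\frac{\partial}{\partial t_j}$, $(\mathbf u|\mathbf v)=\sum_iu_iv_i$, $D(\mathbf u,\mathbf r)=\sum_iu_it^{\mathbf r}d_i$. $\mathcal D_n=\mathrm{span}\{D(\mathbf u,\mathbf r):(\mathbf u|\mathbf r)=0\}$ with $[D(\mathbf p,\mathbf m),D(\mathbf q,\mathbf k)]=D((\mathbf p|\mathbf k)\mathbf q-(\mathbf q|\mathbf m)\mathbf p,\mathbf m+\mathbf k)$; $\mathcal G=\mathcal D_n\ltimes\mathcal A_n$ with $[D(\mathbf u,\mathbf r),t^{\mathbf m}]=(\mathbf u|\mathbf m)t^{\mathbf r+\mathbf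 m}$, $[t^{\mathbf r},t^{\mathbf m}]=0$. Grading: $\mathcal G_{\mathbf m}=\mathrm{span}\{D(\mathbf u,\mathbf m):(\mathbf u|\mathbf m)=0\}\oplus\mathbb Ct^{\mathbf m}$ ($\mathbf m\ne\mathbf 0$), $\mathcal G_{\mathbf 0}=\mathrm{span}\{d_j\}\oplus\mathbb Ct^{\mathbf 0}$. Harish-Chandra module: weight module for $\mathcal H=\mathrm{span}\{d_j\}$ with finite-dimensional weight spaces. GHW module: there are a nonzero weight vector $v$ and $k\in\mathbb N$ with $\mathcal G_{\mathbf m}v=0$ for all $\mathbf m\ge(k,\dots,k)$ componentwise. For $A\in GL_n(\mathbb Z)$, $T_A$ is the automorphism $D(\mathbf u,\mathbf r)\mapsto D((A^T)^{-1}\mathbf u,A\mathbf r)$, $t^{\mathbf r}\mapsto t^{A\mathbf r}$. *)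

From mathcomp Require Import all_boot all_algebra.
From mathcomp Require Import complex.
From mathcomp Require Import Rstruct.
Set Implicit Arguments. Unset Strict Implicit. Unset Printing Implicit Defensive.
Import GRing.Theory.
Local Open Scope ring_scope.

Definition C : numClosedFieldType := complex Rdefinitions.R.

Definition pairCZ (n : nat) (u : 'rV[C]_n) (m : 'rV[int]_n) : C :=
  \sum_(i < n) u 0 i * (m 0 i)%:~R.

Definition evec (n : nat) (j : 'I_n) : 'rV[C]_n := \row_(i < n) (i == j)%:R.

(* A representation of G = D_n |x A_n on the C-vector space V.
   G has the basis-free presentation: for each r in Z^n, the elements
   D(u,r) (u in C^n, (u|r)=0), depending linearly on u (injectively), and
   t^r; G is the direct sum over r of these.  Hence a G-module structure on
   V is exactly the data of operators actD u r = action of D(u,r)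
   (meaningful for (u|r)=0) and actT r = action of t^r, all C-linear on V,
   actD linear in u on {u | (u|r)=0}, satisfying the bracket relations. *)
Record Gmodule (n : nat) (V : lmodType C) := {
  actD : 'rV[C]_n -> 'rV[int]_n -> V -> V ;
  actT : 'rV[int]_n -> V -> V ;
  actD_lin : forall u r (a : C) (x y : V),
      actD u r (a *: x + y) = a *: actD u r x + actD u r y ;
  actT_lin : forall r (a : C) (x y : V),
      actT r (a *: x + y) = a *: actT r x + actT r y ;
  actD_linu : forall u w r (a : C) (x : V),
      pairCZ u r = 0 -> pairCZ w r = 0 ->
      actD (a *: u + w) r x = a *: actD u r x + actD w r x ;
  brDD : forall p m q k (x : V), pairCZ p m = 0 -> pairCZ q k = 0 ->
      actD p m (actD q k x) - actD q k (actD p m x) =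
      actD (pairCZ p k *: q - pairCZ q m *: p) (m + k) x ;
  brDT : forall u r m (x : V), pairCZ u r = 0 ->
      actD u r (actT m x) - actT m (actD u r x) =
      pairCZ u m *: actT (r + m) x ;
  brTT : forall r m (x : V), actT r (actT m x) = actT m (actT r x)
}.

Section Defs.
Variables (n : nat) (V : lmodType C) (M : Gmodule n V).

Definition act_d (j : 'I_n) : V -> V := actD M (evec j) 0.

Definition in_weight_space (lambda : 'rV[C]_n) (v : V) : Prop :=
  forall j : 'I_n, act_d j v = lambda 0 j *: v.

Definition weight_vector (v : V) : Prop :=
  exists lambda, in_weight_space lambda v.

Definition weight_module : Prop :=
  forall v : V, exists s : seq V,
    (forall w, w \in s -> weight_vector w) /\ v = \sum_(w <- s) w.

Definition finite_dim_weight_spaces : Prop :=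
  forall lambda, exists s : seq V, forall v, in_weight_space lambda v ->
    exists c : 'I_(size s) -> C, v = \sum_(i < size s) c i *: s`_i.

Definition harish_chandra : Prop :=
  weight_module /\ finite_dim_weight_spaces.

Definition submodule (P : V -> Prop) : Prop :=
  [/\ P 0, (forall (a : C) x y, P x -> P y -> P (a *: x + y)),
      (forall u r x, pairCZ u r = 0 -> P x -> P (actD M u r x)) &
      (forall r x, P x -> P (actT M r x))].

Definition irreducible : Prop :=
  (exists v : V, v != 0) /\
  forall P, submodule P -> (forall x, P x -> x = 0) \/ (forall x, P x).

(* G_m v = 0, where G_m = span{D(u,m) : (u|m)=0} + C t^m
   (for m = 0 this is span{d_j} + C t^0, since D(u,0) = sum u_i d_i) *)
Definition kills (m : 'rV[int]_n) (v : V) : Prop :=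
  (forall u, pairCZ u m = 0 -> actD M u m v = 0) /\ actT M m v = 0.

End Defs.

From mathcomp Require Import all_boot all_order all_algebra.
Import GRing.Theory Num.Theory Order.TTheory.
Set Implicit Arguments. Unset Strict Implicit. Unset Printing Implicit Defensive.
Local Open Scope ring_scope.

(* If v is killed by G_m and G_k and some p satisfies (p|m) = 0 and (p|k) = 1,
   then bracketing with D(p,m) shows that v is killed by G_(m+k).  Writing
   m = c A and k = alpha_i, such a p exists (from the basis dual to the
   alpha's) as soon as c has a nonzero coordinate other than the i-th.
   Starting from the alpha_i themselves, repeated additions of this kind reach
   every c with positive coordinates, provided n >= 2; so k = 1 works. *)

Lemma semilinear_eq0 (V : lmodType C) (f : V -> V) :
  (forall (a : C) x y, f (a *: x + y) = a *: f x + f y) -> f 0 = 0.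
Proof.
move=> f_lin; apply: (@addrI _ (f 0)).
by rewrite addr0 -{1}[f 0]scale1r -f_lin scale1r addr0.
Qed.

Section Pairing.
Variable n : nat.

Lemma pairCZ_linl (a : C) (u w : 'rV[C]_n) r :
  pairCZ (a *: u + w) r = a * pairCZ u r + pairCZ w r.
Proof.
rewrite /pairCZ mulr_sumr -big_split /=; apply: eq_bigr => i _.
by rewrite !mxE mulrDl mulrA.
Qed.

Lemma pairCZ_addr (u : 'rV[C]_n) r m : pairCZ u (r + m) = pairCZ u r + pairCZ u m.
Proof.
rewrite /pairCZ -big_split /=; apply: eq_bigr => i _.
by rewrite !mxE intrD mulrDr.
Qed.

Lemma pairCZE (u : 'rV[C]_n) (m : 'rV[int]_n) :
  pairCZ u m = (map_mx intr m *m u^T) 0 0.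
Proof. by rewrite /pairCZ mxE; apply: eq_bigr => i _; rewrite !mxE mulrC. Qed.

Definition dual_vec (A : 'M[int]_n) (j : 'I_n) : 'rV[C]_n :=
  (col j (map_mx intr (invmx A)))^T.

Lemma pairCZ_dual_vec (A : 'M[int]_n) (c : 'rV[int]_n) j :
  A \in unitmx -> pairCZ (dual_vec A j) (c *m A) = (c 0 j)%:~R.
Proof.
move=> A_unit; rewrite pairCZE trmxK colE map_mxM -mulmxA (mulmxA (map_mx _ A)).
by rewrite -map_mxM mulmxV // map_mx1 mul1mx -colE !mxE.
Qed.

End Pairing.

Section Annihilators.
Variables (n : nat) (V : lmodType C) (M : Gmodule n V).

Lemma actD0 u r : actD M u r 0 = 0.
Proof. exact/semilinear_eq0/actD_lin. Qed.

Lemma actT0 r : actT M r 0 = 0.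
Proof. exact/semilinear_eq0/actT_lin. Qed.

Lemma kills_add v m k p : kills M m v -> kills M k v ->
  pairCZ p m = 0 -> pairCZ p k = 1 -> kills M (m + k) v.
Proof.
move=> [Dm_v Tm_v] [Dk_v Tk_v] pm0 pk1; split; last first.
  by have := brDT M k v pm0; rewrite Tk_v Dm_v // actD0 actT0 subrr pk1 scale1r.
move=> w w_mk0.
(* [D(p,m), D(q,k)] = D(w, m+k) for this q *)
pose q := pairCZ w m *: p + w.
have qk0 : pairCZ q k = 0 by rewrite pairCZ_linl pk1 mulr1 -pairCZ_addr.
have qm : pairCZ q m = pairCZ w m by rewrite pairCZ_linl pm0 mulr0 add0r.
have := brDD M v pm0 qk0.
by rewrite Dk_v // Dm_v // !actD0 subrr pk1 qm scale1r addrAC subrr add0r.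
Qed.

End Annihilators.

Section UnitAdditionClosure.
Variables (n : nat) (S : 'rV[int]_n -> Prop).
Hypothesis S_unit : forall i, S 'e_i.
Hypothesis S_add_unit : forall (c : 'rV[int]_n) (i l : 'I_n),
  l != i -> c 0 l != 0 -> S c -> S (c + 'e_i).

Lemma closure_addZ (c : 'rV[int]_n) (i l : 'I_n) (t : int) :
  l != i -> c 0 l != 0 -> 0 <= t -> S c -> S (c + t *: 'e_i).
Proof.
move=> li cl /gez0_abs <- Sc; elim: `|t|%N => [|s IH].
  by rewrite scale0r addr0.
rewrite -[s.+1]addn1 PoszD scalerDl scale1r addrA.
apply: (S_add_unit li _ IH).
by rewrite !mxE (negbTE li) mulr0 addr0.
Qed.

Lemma closure_unit_add_sum i0 (s : seq 'I_n) (f : 'I_n -> int) :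
  (forall i, 0 <= f i) -> S ('e_i0 + \sum_(i <- s | i != i0) f i *: 'e_i).
Proof.
move=> f_ge0; elim: s => [|i s IH]; first by rewrite big_nil addr0.
rewrite big_cons; case: ifP => // ii0.
rewrite addrCA addrC; apply: (closure_addZ (l := i0) _ _ (f_ge0 i) IH).
  by rewrite eq_sym ii0.
rewrite !mxE summxE big1 ?addr0 ?eqxx // => j ji0.
by rewrite !mxE eq_sym (negbTE ji0) mulr0.
Qed.

Lemma closure_contains_pos :
  (1 < n)%N -> forall c : 'rV[int]_n, (forall i, 0 < c 0 i) -> S c.
Proof.
move=> n_gt1 c c_gt0.
pose i0 := Ordinal (ltnW n_gt1); pose i1 := Ordinal n_gt1.
have i10 : i1 != i0 by [].
pose c' : 'rV[int]_n := 'e_i0 + \sum_(i | i != i0) c 0 i *: 'e_i.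
have cE : c = c' + (c 0 i0 - 1) *: 'e_i0.
  rewrite /c' {1}[c]row_sum_delta (bigD1 i0) //= scalerBl scale1r.
  by rewrite addrAC addrCA subrr addr0.
have c'_i1 : c' 0 i1 = c 0 i1.
  by rewrite [in RHS]cE !mxE (negbTE i10) mulr0 addr0.
rewrite cE; apply: (closure_addZ i10).
- by rewrite c'_i1 gt_eqF.
- by rewrite subr_ge0 -gtz0_ge1.
- exact: closure_unit_add_sum (fun i => ltW (c_gt0 i)).
Qed.
End UnitAdditionClosure.

Lemma kills_add_row n (V : lmodType C) (M : Gmodule n V) (A : 'M[int]_n)
    (v : V) (c : 'rV[int]_n) (i l : 'I_n) :
  A \in unitmx -> (forall j, kills M (row j A) v) ->
  l != i -> c 0 l != 0 -> kills M (c *m A) v -> kills M ((c + 'e_i) *m A) v.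
Proof.
move=> A_unit killsA li cl0 kills_c.
pose p := - ((c 0 i)%:~R / (c 0 l)%:~R) *: dual_vec A l + dual_vec A i.
have cl0C : (c 0 l)%:~R != 0 :> C by rewrite intr_eq0.
rewrite mulmxDl; apply: (kills_add (p := p) kills_c); first by rewrite -rowE.
  by rewrite pairCZ_linl !pairCZ_dual_vec // mulNr divfK // addNr.
by rewrite pairCZ_linl !pairCZ_dual_vec // !mxE (negbTE li) /= eqxx mulr0 add0r.
Qed.

Theorem lemma4p2 (n : nat) (hn : (2 <= n)%N) (V : lmodType C)
    (M : Gmodule n V) (A : 'M[int]_n) (v : V) :
  irreducible M -> harish_chandra M ->
  A \in unitmx ->
  v != 0 -> weight_vector M v ->
  (forall i : 'I_n, kills M (row i A) v) ->
  exists k : nat, forall c : 'rV[int]_n,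
    (forall i : 'I_n, (k%:Z <= c 0 i)%R) -> kills M (c *m A) v.
Proof.
move=> _ _ A_unit _ _ killsA; exists 1%N => c c_ge1.
apply: (closure_contains_pos (S := fun c => kills M (c *m A) v)) => // [i | c' i l].
- by rewrite -rowE.
- exact: (kills_add_row A_unit killsA).
Qed.
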